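(* In the zero-sum three-door Monty Hall game described in the context (value $V=2/3$), a mixed strategy $Q$ of Monte is minimax (i.e. $\max_P W(P,Q)=2/3$) if and only if $Q=Q^*_{\lambda_1,\lambda_2,\lambda_3}$ for some $\lambda_1,\lambda_2,\lambda_3\in[0,1]$, where $Q^*_{\lambda_1,\lambda_2,\lambda_3}$ assigns to the pure strategies $(1,2),(1,3),(2,1),(2,3),(3,1),(3,2)$ the probabilities $\lambda_1/3,(1-\lambda_1)/3,\lambda_2/3,(1-\lambda_2)/3,\lambda_3/3,(1-\lambda_3)/3$ respectively; equivalently, iff $\theta$ is uniformly distributed on $\{1,2,3\}$ under $Q$.
   Context: Doors are numbered $1,2,3$. A pure strategy of Monte is a pair $(\theta,d)$ with $\theta\in\{1,2,3\}$ (the door hiding the prize) and $d\in\{1,2,3\}\setminus\{\theta\}$ (six strategies). A pure strategy of Conie is a triple $x\,a\,b$ with $x\in\{1,2,3\}$ and $a,b\in\{\mathrm{h},\mathrm{s}\}$ (twelve strategies). Under the profile $((\theta,d),x\,a\,b)$: Monte offers door $y=\theta$ if $x\neq\theta$ and $y=d$ if $x=\theta$; Conie's action is $a$ if $y$ is the smaller of the two doors in $\{1,2,3\}\setminus\{x\}$ and $b$ otherwise; her final choice is $z=x$ for action $\mathrm{h}$ and $z=y$ for action $\mathrm{s}$; she wins (payoff 1) iff $z=\theta$, else payoff 0; Monte's payoff is the negative. Mixed strategies are probability distributions on pure strategies, played independently; $W(P,Q)$ denotes the probability that Conie wins when Conie plays $P$ and Monte plays $Q$. A strategy $Q$ of Monte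 is minimax if $\max_P W(P,Q)=\min_{Q'}\max_P W(P,Q')$. *)

From HB Require Import structures.
From mathcomp Require Import all_boot all_order all_algebra.
From mathcomp Require Import classical_sets reals.
Set Implicit Arguments. Unset Strict Implicit. Unset Printing Implicit Defensive.
Import Order.TTheory GRing.Theory Num.Theory.
Local Open Scope ring_scope.
Local Open Scope classical_set_scope.

(* Doors 1,2,3 are represented by the ordinals 0,1,2 of 'I_3 (door k+1 <-> k). *)
Definition door := 'I_3.

Definition MPure := {p : door * door | p.1 != p.2}.

(* Pure strategies of Conie: triples (x, a, b); an action is a boolean,
   [false] = h (hold), [true] = s (switch). *)
Definition CPure := (door * bool * bool)%type.

Definition smaller_other (x : door) : door :=
  if x == ord0 then inord 1 else ord0.

Definition offered (m : MPure) (c : CPure) : door :=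
  let: (theta, d) := val m in
  let: (x, _, _) := c in
  if x != theta then theta else d.

Definition final (m : MPure) (c : CPure) : door :=
  let: (x, a, b) := c in
  let y := offered m c in
  let act := if y == smaller_other x then a else b in
  if act then y else x.

Definition wins (m : MPure) (c : CPure) : bool := final m c == (val m).1.

Definition is_mixed (R : numDomainType) (T : finType) (P : {ffun T -> R}) :=
  (forall t, 0 <= P t) /\ \sum_t P t = 1.

Definition W (R : numDomainType) (P : {ffun CPure -> R}) (Q : {ffun MPure -> R}) : R :=
  \sum_(c : CPure) \sum_(m : MPure) P c * Q m * (wins m c)%:R.

Definition maxW (R : realType) (Q : {ffun MPure -> R}) : R :=
  sup [set W P Q | P in [set P : {ffun CPure -> R} | is_mixed P]].

Definition minimax (R : realType) (Q : {ffun MPure -> R}) : Prop :=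
  is_mixed Q /\ forall Q' : {ffun MPure -> R}, is_mixed Q' -> maxW Q <= maxW Q'.

Definition Qstar (R : numFieldType) (l1 l2 l3 : R) : {ffun MPure -> R} :=
  [ffun m : MPure =>
     match nat_of_ord (val m).1, nat_of_ord (val m).2 with
     | 0%N, 1%N => l1 / 3
     | 0%N, _   => (1 - l1) / 3
     | 1%N, 0%N => l2 / 3
     | 1%N, _   => (1 - l2) / 3
     | _, 0%N   => l3 / 3
     | _, _     => (1 - l3) / 3
     end].

Definition theta_uniform (R : numFieldType) (Q : {ffun MPure -> R}) : Prop :=
  forall t : door, \sum_(m : MPure | (val m).1 == t) Q m = 1 / 3.

From HB Require Import structures.
From mathcomp Require Import all_boot all_order all_algebra.
From mathcomp Require Import classical_sets reals.
From mathcomp Require Import lra.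
Set Implicit Arguments. Unset Strict Implicit. Unset Printing Implicit Defensive.
Import Order.TTheory GRing.Theory Num.Theory.
Local Open Scope ring_scope.

(* Against any Q, the pure strategy "pick door x, always switch" wins exactly
   when the prize is not behind x, i.e. with probability 1 - Q(theta = x).
   Summing over the three doors shows that Conie can always secure 2/3, and
   that Monte holds her to 2/3 only if theta is uniform.  Conversely, when
   theta is uniform every pure strategy of Conie wins with probability at
   most 2/3: for each door t other than x she wins either on the event
   theta = t (by switching at t) or on the event (theta, d) = (x, t) (by
   holding at t), never both. *)

Definition d0 : door := @Ordinal 3 0 isT.
Definition d1 : door := @Ordinal 3 1 isT.
Definition d2 : door := @Ordinal 3 2 isT.

Definition m01 : MPure := exist _ (d0, d1) isT.
Definition m02 : MPure := exist _ (d0, d2) isT.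
Definition m10 : MPure := exist _ (d1, d0) isT.
Definition m12 : MPure := exist _ (d1, d2) isT.
Definition m20 : MPure := exist _ (d2, d0) isT.
Definition m21 : MPure := exist _ (d2, d1) isT.

Lemma door_cases (x : door) : [\/ x = d0, x = d1 | x = d2].
Proof.
case: x => [[|[|[|n]]] Hn]; [apply: Or31|apply: Or32|apply: Or33|by []];
  exact: val_inj.
Qed.

Lemma MPure_cases (m : MPure) :
  m = m01 \/ m = m02 \/ m = m10 \/ m = m12 \/ m = m20 \/ m = m21.
Proof.
case: m => [[i j] Hij].
case: (door_cases i) (door_cases j) => -> [] -> in Hij *; try by [];
  do ?[by left; congr exist; exact: eq_irrelevance | right];
  congr exist; exact: eq_irrelevance.
Qed.

Lemma sum_door (R : nmodType) (F : door -> R) :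
  \sum_t F t = F d0 + F d1 + F d2.
Proof.
rewrite big_ord_recr big_ord_recr big_ord1 /=.
by congr (_ + _ + _); apply/congr1/val_inj.
Qed.

Lemma sum_MPure (R : zmodType) (F : MPure -> R) :
  \sum_m F m = F m01 + F m02 + F m10 + F m12 + F m20 + F m21.
Proof.
rewrite (bigD1 m01) //= (bigD1 m02) //= (bigD1 m10) //= (bigD1 m12) //=
  (bigD1 m20) //= (bigD1 m21) //= big1 ?addr0 ?addrA //.
by move=> m; case: (MPure_cases m) => [|[|[|[|[|]]]]] ->; rewrite ?eqxx ?andbF.
Qed.

Definition pure_win (R : numDomainType) (Q : {ffun MPure -> R}) (c : CPure) : R :=
  \sum_m Q m * (wins m c)%:R.

Definition theta_mass (R : numDomainType) (Q : {ffun MPure -> R}) (t : door) : R :=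
  \sum_(m : MPure | (val m).1 == t) Q m.

Lemma wins_switch (m : MPure) (x : door) : wins m (x, true, true) = ((val m).1 != x).
Proof.
case: m => [[th d] /= Hd]; rewrite /wins /final /offered /= if_same.
have [_|_] /= := eqVneq x th; last by rewrite eqxx.
by rewrite eq_sym (negPf Hd).
Qed.

Section PureWin.
Variable R : numDomainType.
Implicit Types (Q : {ffun MPure -> R}) (P : {ffun CPure -> R}).

Lemma W_pure_win P Q : W P Q = \sum_c P c * pure_win Q c.
Proof.
apply: eq_bigr => c _; rewrite /pure_win mulr_sumr.
by apply: eq_bigr => m _; rewrite mulrA.
Qed.

Lemma pure_win_switch Q x :
  pure_win Q (x, true, true) = \sum_m Q m - theta_mass Q x.
Proof.
have -> : \sum_m Q m = theta_mass Q x + \sum_(m | (val m).1 != x) Q m.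
  exact: bigID.
rewrite addrC addKr /pure_win (bigID (fun m : MPure => (val m).1 == x)) /=.
rewrite big1 => [|m /eqP <-]; last by rewrite wins_switch eqxx mulr0.
by rewrite add0r; apply: eq_bigr => m neq; rewrite wins_switch neq mulr1.
Qed.

Lemma sum_theta_mass Q : \sum_t theta_mass Q t = \sum_m Q m.
Proof. by rewrite (partition_big (fun m : MPure => (val m).1) predT). Qed.

Lemma pure_win_le1 Q c : is_mixed Q -> pure_win Q c <= 1.
Proof.
case=> Q0 <-; apply: ler_sum => m _.
by case: (wins m c); rewrite ?mulr1 ?mulr0.
Qed.

Lemma W_le P Q B : is_mixed P -> (forall c, pure_win Q c <= B) -> W P Q <= B.
Proof.
case=> P0 P1 HB; rewrite W_pure_win (@le_trans _ _ (\sum_c P c * B)) //.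
  by apply: ler_sum => c _; apply: ler_wpM2l.
by rewrite -mulr_suml P1 mul1r.
Qed.

Definition dirac (c : CPure) : {ffun CPure -> R} := [ffun c' => (c' == c)%:R].

Lemma dirac_mixed c : is_mixed (dirac c).
Proof.
split=> [t|]; first by rewrite ffunE ler0n.
rewrite (bigD1 c) //= ffunE eqxx big1 ?addr0 // => t /negPf ht.
by rewrite ffunE ht.
Qed.

Lemma W_dirac c Q : W (dirac c) Q = pure_win Q c.
Proof.
rewrite W_pure_win (bigD1 c) //= ffunE eqxx mul1r big1 ?addr0 // => t /negPf ht.
by rewrite ffunE ht mul0r.
Qed.

End PureWin.

Section Uniform.
Variable R : realFieldType.
Implicit Types (Q : {ffun MPure -> R}).

Lemma theta_uniformE Q : theta_uniform Q <->
  [/\ Q m01 + Q m02 = 1/3, Q m10 + Q m12 = 1/3 & Q m20 + Q m21 = 1/3].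
Proof.
have massE t : theta_mass Q t = \sum_m (if (val m).1 == t then Q m else 0).
  by rewrite /theta_mass big_mkcond.
have [E0 E1 E2] : [/\ theta_mass Q d0 = Q m01 + Q m02,
    theta_mass Q d1 = Q m10 + Q m12 & theta_mass Q d2 = Q m20 + Q m21].
  by split; rewrite massE sum_MPure /= ?add0r ?addr0.
split=> [U | [U0 U1 U2] t].
  by rewrite -E0 -E1 -E2; split; apply: U.
by change (theta_mass Q t = 1/3); case: (door_cases t) => ->; rewrite ?E0 ?E1 ?E2.
Qed.

Lemma pure_win_le_two_thirds Q c :
  is_mixed Q -> theta_uniform Q -> pure_win Q c <= 2/3.
Proof.
have inord1 : inord 1 = d1 :> door by apply: val_inj; rewrite /= inordK.
case=> Q0 Q1 /theta_uniformE [U0 U1 U2].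
move: Q1 (Q0 m01) (Q0 m02) (Q0 m10) (Q0 m12) (Q0 m20) (Q0 m21); rewrite sum_MPure.
case: c => [[x a] b]; case: (door_cases x) => ->; case: a; case: b;
  rewrite /pure_win sum_MPure /wins /final /offered /smaller_other /= ?inord1 /=
    ?mulr1 ?mulr0 ?add0r ?addr0; lra.
Qed.

Lemma Qstar_mixed (l1 l2 l3 : R) :
  0 <= l1 <= 1 -> 0 <= l2 <= 1 -> 0 <= l3 <= 1 -> is_mixed (Qstar l1 l2 l3).
Proof.
move=> /andP[? ?] /andP[? ?] /andP[? ?]; split.
  by move=> m; case: (MPure_cases m) => [|[|[|[|[|]]]]] ->; rewrite ffunE /=; lra.
rewrite sum_MPure !ffunE /=; lra.
Qed.

Lemma Qstar_theta_uniform (l1 l2 l3 : R) : theta_uniform (Qstar l1 l2 l3).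
Proof. by apply/theta_uniformE; rewrite !ffunE /=; split; lra. Qed.

Lemma theta_uniform_Qstar Q : is_mixed Q -> theta_uniform Q ->
  exists l1 l2 l3 : R,
    [/\ 0 <= l1 <= 1, 0 <= l2 <= 1, 0 <= l3 <= 1 & Q = Qstar l1 l2 l3].
Proof.
case=> Q0 _ /theta_uniformE [U0 U1 U2].
move: (Q0 m01) (Q0 m02) (Q0 m10) (Q0 m12) (Q0 m20) (Q0 m21) => *.
exists (3 * Q m01), (3 * Q m10), (3 * Q m20).
split; try (apply/andP; split; lra).
by apply/ffunP => m; case: (MPure_cases m) => [|[|[|[|[|]]]]] ->; rewrite ffunE /=; lra.
Qed.

End Uniform.

Section MaxW.
Variable R : realType.
Implicit Types (Q : {ffun MPure -> R}).

Lemma maxW_le Q B : (forall c, pure_win Q c <= B) -> maxW Q <= B.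
Proof.
move=> HB; apply: ge_sup.
  by exists (W (dirac R (d0, true, true)) Q), (dirac R (d0, true, true));
    first exact: dirac_mixed.
by move=> _ [P HP <-]; apply: W_le.
Qed.

Lemma pure_win_le_maxW Q c : is_mixed Q -> pure_win Q c <= maxW Q.
Proof.
move=> HQ; apply: ub_le_sup.
  by exists 1 => _ [P HP <-]; apply: W_le => // c'; apply: pure_win_le1.
by exists (dirac R c); [exact: dirac_mixed | exact: W_dirac].
Qed.

Lemma switch_theta_mass Q x : is_mixed Q -> 1 - theta_mass Q x <= maxW Q.
Proof.
by case=> Q0 Q1; rewrite -Q1 -pure_win_switch; apply: pure_win_le_maxW.
Qed.

Lemma theta_mass_door_sum Q : is_mixed Q ->
  theta_mass Q d0 + theta_mass Q d1 + theta_mass Q d2 = 1.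
Proof. by case=> _ <-; rewrite -sum_door sum_theta_mass. Qed.

Lemma two_thirds_le_maxW Q : is_mixed Q -> 2/3 <= maxW Q.
Proof.
move=> HQ; have := theta_mass_door_sum HQ.
have := switch_theta_mass d0 HQ; have := switch_theta_mass d1 HQ.
have := switch_theta_mass d2 HQ; lra.
Qed.

Lemma maxW_theta_uniform Q : is_mixed Q -> theta_uniform Q -> maxW Q = 2/3.
Proof.
move=> HQ HU; apply/eqP; rewrite eq_le two_thirds_le_maxW // andbT.
by apply: maxW_le => c; apply: pure_win_le_two_thirds.
Qed.

Lemma theta_uniform_maxW Q : is_mixed Q -> maxW Q <= 2/3 -> theta_uniform Q.
Proof.
move=> HQ Hmax t; change (theta_mass Q t = 1/3); have := theta_mass_door_sum HQ.
have := switch_theta_mass d0 HQ; have := switch_theta_mass d1 HQ.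
have := switch_theta_mass d2 HQ.
by case: (door_cases t) => ->; lra.
Qed.

End MaxW.

Theorem mainTheorem7 (R : realType) (Q : {ffun MPure -> R}) :
  is_mixed Q ->
  (minimax Q <-> maxW Q = 2 / 3) /\
  (minimax Q <->
     exists l1 l2 l3 : R,
       [/\ 0 <= l1 <= 1, 0 <= l2 <= 1, 0 <= l3 <= 1 & Q = Qstar l1 l2 l3]) /\
  (minimax Q <-> theta_uniform Q).
Proof.
move=> HQ.
have unif : theta_uniform Q <-> maxW Q = 2/3.
  split; first exact: maxW_theta_uniform.
  by move=> Hmax; apply: theta_uniform_maxW => //; rewrite Hmax.
have l01 : 0 <= (0 : R) <= 1 by rewrite lexx ler01.
have value : maxW (Qstar 0 0 0 : {ffun MPure -> R}) = 2/3.
  exact: maxW_theta_uniform (Qstar_mixed l01 l01 l01) (Qstar_theta_uniform _ _ _).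
have minimaxE : minimax Q <-> maxW Q = 2/3.
  split=> [[_ Hmin] | Hmax].
    apply/eqP; rewrite eq_le two_thirds_le_maxW // andbT -value.
    exact/Hmin/Qstar_mixed.
  by split=> // Q' HQ'; rewrite Hmax; apply: two_thirds_le_maxW.
split=> //; split; last by rewrite minimaxE unif.
rewrite minimaxE -unif; split; first exact: theta_uniform_Qstar.
by case=> l1 [l2 [l3 [_ _ _ ->]]]; apply: Qstar_theta_uniform.
Qed.
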